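(* In the half-line setting, assume $r_j=0$ for all $j\ge0$ and $C_R<\infty$ (positive recurrence). Let $\pi$ be as defined below. Then for every $j\ge0$, every unit vector $\Psi_0=\sum_{k\ge0:|k-j|=1}\alpha_k\delta_{(k,j)}$ and every $i\ge0$, $$\overline{\mu}^{(\Psi_0)}_\infty(i)\ \ge\ 2\,|\langle a_j,\Psi_0\rangle|^2\,\pi(i)\,\pi(j).$$
   Context: Half-line setting: $V=\mathbb{Z}_+$, parameters $p_j,q_j,r_j\ge0$ with $p_j+q_j+r_j=1$, $q_0=0$, $p_j>0$ ($j\ge0$), $q_j>0$ ($j\ge1$); here $r_j=0$, so there are no self loops. Arcs: $|j;R\rangle=\delta_{(j+1,j)}$ ($j\ge0$), $|j;L\rangle=\delta_{(j-1,j)}$ ($j\ge1$), arc $(u,v)$ going from $v$ to $u$. Shift $S$: $|j;R\rangle\leftrightarrow|j+1;L\rangle$. $a_j=\sqrt{q_j}|j;L\rangle+\sqrt{p_j}|j;R\rangle$. $\Pi_A$ is the orthogonal projection onto the closed span of $\{a_j\}$, $C=2\Pi_A-I$, $U=SC$. $P(X_t=i)=\sum_J|\langle i;J|U^t\Psi_0\rangle|^2$ over arcs out of $i$; $\overline{\mu}^{(\Psi_0)}_\infty(i)=\lim_{T\to\infty}\frac1T\sum_{t=0}^{T-1}P(X_t=i)$. $C_R=\sum_{j\ge1}\frac{p_0\cdots p_{j-1}}{q_1\cdots q_j}$ and $\pi(j)=\frac1{1+C_R}\{\delta_0(j)+(1-\delta_0(j))\frac{p_0\cdots p_{j-1}}{q_1\cdots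 q_j}\}$. *)

From Stdlib Require Import Reals.
Open Scope R_scope.

Record Cx : Type := mkCx { re : R ; im : R }.
Definition Cx0 : Cx := mkCx 0 0.
Definition Cxadd (z w : Cx) : Cx := mkCx (re z + re w) (im z + im w).
Definition Cxsub (z w : Cx) : Cx := mkCx (re z - re w) (im z - im w).
Definition Cxscale (a : R) (z : Cx) : Cx := mkCx (a * re z) (a * im z).
Definition Cxnorm2 (z : Cx) : R := re z * re z + im z * im z.

(* Arcs of the half line Z_+ (no self loops since r_j = 0):
     Rt j  =  |j;R>   = delta_{(j+1,j)}  (arc from j to j+1), j >= 0
     Lf j  =  |j+1;L> = delta_{(j,j+1)}  (arc from j+1 to j), j >= 0   *)
Inductive arc : Type := Rt (j : nat) | Lf (j : nat).

Definition tail (e : arc) : nat := match e with Rt j => j | Lf j => S j end.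

Definition state := arc -> Cx.

(* <a_j, psi>, where a_j = sqrt q_j |j;L> + sqrt p_j |j;R>  (a_j is real);
   for j = 0 there is no arc |0;L> (and q_0 = 0). *)
Definition ip_a (p q : nat -> R) (j : nat) (psi : state) : Cx :=
  match j with
  | O => Cxscale (sqrt (p 0%nat)) (psi (Rt 0))
  | S k => Cxadd (Cxscale (sqrt (q j)) (psi (Lf k))) (Cxscale (sqrt (p j)) (psi (Rt j)))
  end.

(* Pi_A psi = sum_j <a_j,psi> a_j  (orthogonal projection onto the closed span
   of the orthonormal family {a_j}, whose members have disjoint supports);
   evaluated at the arc e it only involves j = tail e. *)
Definition projA (p q : nat -> R) (psi : state) : state :=
  fun e => match e with
  | Rt j => Cxscale (sqrt (p j)) (ip_a p q j psi)
  | Lf j => Cxscale (sqrt (q (S j))) (ip_a p q (S j) psi)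
  end.

Definition coin (p q : nat -> R) (psi : state) : state :=
  fun e => Cxsub (Cxscale 2 (projA p q psi e)) (psi e).

Definition swap (e : arc) : arc := match e with Rt j => Lf j | Lf j => Rt j end.
Definition shift (psi : state) : state := fun e => psi (swap e).

Definition Uop (p q : nat -> R) (psi : state) : state := shift (coin p q psi).

Fixpoint Upow (p q : nat -> R) (t : nat) (psi : state) : state :=
  match t with O => psi | S t' => Uop p q (Upow p q t' psi) end.

(* P(X_t = i) = sum over arcs out of i of |<i;J| U^t Psi0>|^2 *)
Definition prob (p q : nat -> R) (psi0 : state) (t i : nat) : R :=
  let psi := Upow p q t psi0 in
  Cxnorm2 (psi (Rt i)) +
  match i with O => 0 | S k => Cxnorm2 (psi (Lf k)) end.

(* time average (1/T) sum_{t=0}^{T-1} P(X_t = i), indexed by n = T-1 *)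
Definition time_avg (p q : nat -> R) (psi0 : state) (i : nat) (n : nat) : R :=
  sum_f_R0 (fun t => prob p q psi0 t i) n / INR (S n).

Fixpoint wgt (p q : nat -> R) (j : nat) : R :=
  match j with O => 1 | S k => wgt p q k * p k / q (S k) end.

Definition pi_stat (p q : nat -> R) (CR : R) (j : nat) : R :=
  / (1 + CR) * (match j with O => 1 | S _ => wgt p q j end).

From Stdlib Require Import Reals Lra Lia Psatz FunctionalExtensionality Classical.
From Coquelicot Require Lim_seq Rbar.
Open Scope R_scope.

(* The walk operator [U = S C] has real entries, so it acts separately on the
   real and imaginary parts of the state; it suffices to treat a real initial
   vector [f] supported on the arcs leaving [j].
   1. Mean ergodic theorem (von Neumann): for a linear isometry [V] of a real
      pre-Hilbert space, the Cesaro averages of [V^t x] are norm-Cauchy (by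
      uniform convexity on the convex hull of the orbit), hence converge
      pointwise, to a [V]-invariant vector.
   2. Finitely supported functions on a graded type form such a space for any
      operator raising supports by one level and preserving truncated square
      sums: this covers [s U] ([s = 1, -1]) on arcs and [U (x) U] on arc pairs.
   3. The invariant vectors of [s U] are the multiples of an explicit [psi_s]
      built from the stationary weights; so the Cesaro limit of [s U] on [f] is
      [c_s psi_s], and [wgt j <a_j, f>^2 = <f, psi_s>^2 <= c_s^2 (1 + C_R)^2].
   4. The Cesaro mean of [(U^t f)(e)^2] converges (step 1 for [U (x) U]) and is
      at least [c_1^2 psi_1(e)^2 + c_(-1)^2 psi_(-1)(e)^2]; summing over the arcs
      leaving [i] gives at least [(c_1^2 + c_(-1)^2) wgt i], which is
      [>= 2 <a_j, f>^2 pi(i) pi(j)] by step 3. *)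

Record IsoSpace (A : Type) := {
  good : (A -> R) -> Prop;
  ip : (A -> R) -> (A -> R) -> R;
  V : (A -> R) -> (A -> R);
  good_lin : forall f g c d, good f -> good g -> good (fun a => c * f a + d * g a);
  good_V : forall f, good f -> good (V f);
  V_lin : forall f g c d a, V (fun a => c * f a + d * g a) a = c * V f a + d * V g a;
  ip_sym : forall f g, good f -> good g -> ip f g = ip g f;
  ip_lin : forall f g h c d, good f -> good g -> good h ->
     ip (fun a => c * f a + d * g a) h = c * ip f h + d * ip g h;
  ip_pos : forall f, good f -> 0 <= ip f f;
  V_iso : forall f, good f -> ip (V f) (V f) = ip f f;
  coord_le : forall f a, good f -> f a * f a <= ip f f
}.
Arguments good {A}. Arguments ip {A}. Arguments V {A}.

Lemma INR_S_pos n : 0 < INR (S n).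
Proof. apply lt_0_INR; lia. Qed.

Lemma cst_cv c : Un_cv (fun _ : nat => c) c.
Proof. intros eps Heps; exists 0%nat; intros; unfold R_dist; rewrite Rminus_diag, Rabs_R0; auto. Qed.

Lemma sum_telescope (u : nat -> R) T :
  sum_f_R0 (fun t => u (S t) - u t) T = u (S T) - u 0%nat.
Proof. induction T; simpl; auto. rewrite IHT. ring. Qed.

Lemma sum_scal (F : nat -> R) c n : sum_f_R0 (fun t => c * F t) n = c * sum_f_R0 F n.
Proof. induction n; simpl; auto. rewrite IHn; ring. Qed.

Lemma bounded_over_T_cv (c : nat -> R) M :
  (forall T, Rabs (c T) <= M) -> Un_cv (fun T => c T / INR (S T)) 0.
Proof.
  intros Hc eps Heps.
  assert (HM : 0 <= M) by (eapply Rle_trans; [apply Rabs_pos | apply (Hc 0%nat)]).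
  destruct (archimed_cor1 (eps / (M + 1))) as [N [HN1 HN2]].
  { apply Rdiv_lt_0_compat; lra. }
  exists N. intros n Hn. unfold R_dist. rewrite Rminus_0_r.
  pose proof (INR_S_pos n) as Hn1.
  assert (HNn : INR N <= INR (S n)) by (apply le_INR; lia).
  assert (HN0 : 0 < INR N) by (apply lt_0_INR; lia).
  assert (Hinv : / INR (S n) <= / INR N) by (apply Rinv_le_contravar; lra).
  assert (HNe : / INR N * (M + 1) < eps).
  { apply Rmult_lt_reg_r with (/ (M + 1)); [apply Rinv_0_lt_compat; lra|].
    rewrite Rmult_assoc, Rinv_r by lra. unfold Rdiv in HN1. lra. }
  unfold Rdiv. rewrite Rabs_mult, (Rabs_pos_eq (/ _)) by (left; apply Rinv_0_lt_compat; lra).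
  pose proof (Hc n). pose proof (Rabs_pos (c n)).
  assert (0 <= / INR (S n)) by (left; apply Rinv_0_lt_compat; lra).
  assert (0 <= / INR N) by (left; apply Rinv_0_lt_compat; lra).
  nra.
Qed.

Lemma sqrt_le_aux x y : 0 <= y -> x <= y * y -> sqrt x <= y.
Proof. intros H1 H2. rewrite <- (sqrt_square y H1). apply sqrt_le_1_alt; auto. Qed.

Lemma sqrt_lt_aux x y : 0 < y -> x < y * y -> sqrt x < y.
Proof.
  intros. destruct (Rle_or_lt 0 x).
  - rewrite <- (sqrt_square y) by lra. apply sqrt_lt_1_alt; split; auto.
  - rewrite sqrt_neg_0 by lra. lra.
Qed.

Lemma quadratic_form_cs a b c :
  (forall x y, 0 <= x * x * a + 2 * x * y * b + y * y * c) -> b * b <= a * c.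
Proof.
  intros Hq.
  assert (Ha : 0 <= a) by (specialize (Hq 1 0); lra).
  assert (Hc : 0 <= c) by (specialize (Hq 0 1); lra).
  destruct (Rle_lt_or_eq_dec 0 c Hc) as [Hc'|Hc'].
  - specialize (Hq c (-b)). assert (0 <= c * (a*c - b*b)) by nra. nra.
  - destruct (Rle_lt_or_eq_dec 0 a Ha) as [Ha'|Ha'].
    + specialize (Hq (-b) a). assert (0 <= a * (a*c - b*b)) by nra. nra.
    + specialize (Hq b (-1)). subst. nra.
Qed.

Section MeanErgodic.
Variable A : Type.
Variable X : IsoSpace A.

Definition norm (f : A -> R) : R := sqrt (ip X f f).

Fixpoint orbit (t : nat) (f : A -> R) : A -> R :=
  match t with O => f | S t' => V X (orbit t' f) end.

Definition cesaro (T : nat) (f : A -> R) : A -> R :=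
  fun a => sum_f_R0 (fun t => orbit t f a) T / INR (S T).

Lemma good_scal f c : good X f -> good X (fun a => c * f a).
Proof.
  intros H. replace (fun a => c * f a) with (fun a => c * f a + 0 * f a).
  - apply good_lin; auto.
  - apply functional_extensionality; intro; ring.
Qed.

Lemma good_sub f g : good X f -> good X g -> good X (fun a => f a - g a).
Proof.
  intros H1 H2. replace (fun a => f a - g a) with (fun a => 1 * f a + (-1) * g a).
  - apply good_lin; auto.
  - apply functional_extensionality; intro; ring.
Qed.

Lemma good_orbit t f : good X f -> good X (orbit t f).
Proof. intros H; induction t; simpl; auto. apply good_V; auto. Qed.

Lemma good_sum (F : nat -> A -> R) n :
  (forall t, good X (F t)) -> good X (fun a => sum_f_R0 (fun t => F t a) n).
Proof.
  intros H; induction n; simpl.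
  - apply H.
  - replace (fun a => sum_f_R0 (fun t => F t a) n + F (S n) a) with
      (fun a => 1 * sum_f_R0 (fun t => F t a) n + 1 * F (S n) a)
      by (apply functional_extensionality; intro; ring).
    apply good_lin; auto.
Qed.

Lemma good_cesaro T f : good X f -> good X (cesaro T f).
Proof.
  intros H. unfold cesaro.
  replace (fun a => sum_f_R0 (fun t => orbit t f a) T / INR (S T)) with
   (fun a => / INR (S T) * sum_f_R0 (fun t => orbit t f a) T)
   by (apply functional_extensionality; intro; unfold Rdiv; ring).
  apply good_scal, good_sum. intro; apply good_orbit; auto.
Qed.

Lemma V_scal f c a : V X (fun a => c * f a) a = c * V X f a.
Proof.
  replace (fun a => c * f a) with (fun a => c * f a + 0 * f a).
  - rewrite V_lin; ring.
  - apply functional_extensionality; intro; ring.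
Qed.

Lemma orbit_lin t f g c d a :
  orbit t (fun a => c * f a + d * g a) a = c * orbit t f a + d * orbit t g a.
Proof.
  revert a; induction t; intro a; simpl; auto.
  replace (orbit t (fun a0 => c * f a0 + d * g a0)) with
    (fun a0 => c * orbit t f a0 + d * orbit t g a0).
  - apply V_lin.
  - apply functional_extensionality; intro; rewrite IHt; auto.
Qed.

Lemma orbit_V t f : orbit t (V X f) = orbit (S t) f.
Proof. induction t; simpl; auto. rewrite IHt; auto. Qed.

Lemma cesaro_lin T f g c d a :
  cesaro T (fun a => c * f a + d * g a) a = c * cesaro T f a + d * cesaro T g a.
Proof.
  unfold cesaro. rewrite (sum_eq _ (fun t => c * orbit t f a + d * orbit t g a)).
  - rewrite sum_plus, !sum_scal. field. pose proof (INR_S_pos T); lra.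
  - intros; apply orbit_lin.
Qed.

Definition avg_weight (T : nat) : R := INR (S T) / INR (S (S T)).

Lemma avg_weight_bounds T : 0 <= avg_weight T <= 1.
Proof.
  unfold avg_weight. pose proof (INR_S_pos T).
  rewrite (S_INR (S T)). split.
  - apply Rmult_le_pos; [lra|]. left; apply Rinv_0_lt_compat; lra.
  - apply Rmult_le_reg_r with (INR (S T) + 1); [lra|].
    unfold Rdiv. rewrite Rmult_assoc, Rinv_l by lra. lra.
Qed.

Lemma cesaro_S T f a :
  cesaro (S T) f a = avg_weight T * cesaro T f a + (1 - avg_weight T) * orbit (S T) f a.
Proof.
  unfold cesaro, avg_weight. simpl sum_f_R0.
  pose proof (INR_S_pos T).
  rewrite (S_INR (S T)). simpl orbit. field. lra.
Qed.

Lemma cesaro_V T f a :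
  cesaro T (V X f) a = cesaro T f a + (orbit (S T) f a - f a) / INR (S T).
Proof.
  unfold cesaro. pose proof (INR_S_pos T).
  rewrite (sum_eq _ (fun t => orbit t f a + (orbit (S t) f a - orbit t f a)))
    by (intros; rewrite orbit_V; ring).
  rewrite sum_plus, (sum_telescope (fun t => orbit t f a)). simpl orbit at 3. field. lra.
Qed.

Lemma V_sum (F : nat -> A -> R) n a :
  V X (fun a => sum_f_R0 (fun t => F t a) n) a = sum_f_R0 (fun t => V X (F t) a) n.
Proof.
  revert a; induction n; intro a; simpl.
  - reflexivity.
  - replace (fun a => sum_f_R0 (fun t => F t a) n + F (S n) a) with
      (fun a => 1 * sum_f_R0 (fun t => F t a) n + 1 * F (S n) a)
      by (apply functional_extensionality; intro; ring).
    rewrite V_lin, IHn. ring.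
Qed.

Lemma V_cesaro T f a : V X (cesaro T f) a = cesaro T (V X f) a.
Proof.
  unfold cesaro, Rdiv.
  replace (fun a => sum_f_R0 (fun t => orbit t f a) T * / INR (S T)) with
    (fun a => / INR (S T) * sum_f_R0 (fun t => orbit t f a) T)
    by (apply functional_extensionality; intro; ring).
  rewrite V_scal, V_sum, Rmult_comm. f_equal.
  apply sum_eq; intros. rewrite orbit_V. reflexivity.
Qed.

Lemma ip_expand f g c d : good X f -> good X g ->
  ip X (fun a => c * f a + d * g a) (fun a => c * f a + d * g a) =
  c * c * ip X f f + 2 * c * d * ip X f g + d * d * ip X g g.
Proof.
  intros Hf Hg. assert (Hl : good X (fun a => c * f a + d * g a)) by (apply good_lin; auto).
  rewrite ip_lin; auto.
  rewrite (ip_sym _ X f), (ip_sym _ X g); auto.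
  rewrite !ip_lin; auto. rewrite (ip_sym _ X g f); auto. ring.
Qed.

Lemma cauchy_schwarz f g : good X f -> good X g ->
  ip X f g * ip X f g <= ip X f f * ip X g g.
Proof.
  intros Hf Hg. apply quadratic_form_cs.
  intros x y. rewrite <- ip_expand by auto. apply ip_pos, good_lin; auto.
Qed.

Lemma norm_pos f : 0 <= norm f.
Proof. apply sqrt_pos. Qed.

Lemma norm_ext f g : (forall a, f a = g a) -> norm f = norm g.
Proof. intros H. replace f with g; auto. apply functional_extensionality; auto. Qed.

Lemma norm_lin f g c d : good X f -> good X g ->
  norm (fun a => c * f a + d * g a) <= Rabs c * norm f + Rabs d * norm g.
Proof.
  intros Hf Hg. unfold norm. rewrite ip_expand; auto.
  assert (Ha : 0 <= ip X f f) by (apply ip_pos; auto).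
  assert (Hc : 0 <= ip X g g) by (apply ip_pos; auto).
  pose proof (cauchy_schwarz f g Hf Hg) as Hcs.
  set (sa := sqrt (ip X f f)). set (sc := sqrt (ip X g g)).
  assert (E1 : sa * sa = ip X f f) by (apply sqrt_sqrt; auto).
  assert (E2 : sc * sc = ip X g g) by (apply sqrt_sqrt; auto).
  assert (P1 : 0 <= sa) by apply sqrt_pos. assert (P2 : 0 <= sc) by apply sqrt_pos.
  assert (Hb : Rabs (ip X f g) <= sa * sc).
  { rewrite <- (Rabs_pos_eq (sa * sc)) by nra. apply Rsqr_le_abs_0. unfold Rsqr. nra. }
  apply sqrt_le_aux.
  - apply Rplus_le_le_0_compat; apply Rmult_le_pos; try apply Rabs_pos; auto.
  - rewrite <- E1, <- E2.
    assert (c*d*ip X f g <= Rabs c * Rabs d * (sa*sc)).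
    { rewrite <- Rabs_mult. apply Rle_trans with (Rabs (c*d) * Rabs (ip X f g)).
      - rewrite <- Rabs_mult. apply Rle_abs.
      - apply Rmult_le_compat_l; auto. apply Rabs_pos. }
    assert (Rabs c * Rabs c = c * c) by (rewrite <- Rabs_mult; apply Rabs_pos_eq; nra).
    assert (Rabs d * Rabs d = d * d) by (rewrite <- Rabs_mult; apply Rabs_pos_eq; nra).
    nra.
Qed.

Lemma norm_convex f g l : good X f -> good X g -> 0 <= l <= 1 ->
  norm (fun a => l * f a + (1 - l) * g a) <= l * norm f + (1 - l) * norm g.
Proof.
  intros. pose proof (norm_lin f g l (1-l) H H0).
  rewrite (Rabs_pos_eq l), (Rabs_pos_eq (1-l)) in H2 by lra. auto.
Qed.

Lemma norm_triangle f g h : good X f -> good X g -> good X h ->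
  norm (fun a => f a - h a) <= norm (fun a => f a - g a) + norm (fun a => g a - h a).
Proof.
  intros. rewrite (norm_ext _ (fun a => 1 * (f a - g a) + 1 * (g a - h a))) by (intro; ring).
  pose proof (norm_lin (fun a => f a - g a) (fun a => g a - h a) 1 1) as Hl.
  rewrite Rabs_R1, !Rmult_1_l in Hl. apply Hl; apply good_sub; auto.
Qed.

Lemma norm_sub_sym f g : good X f -> good X g ->
  norm (fun a => f a - g a) = norm (fun a => g a - f a).
Proof.
  intros. rewrite (norm_ext _ (fun a => (-1) * (g a - f a) + 0 * (g a - f a))) by (intro; ring).
  unfold norm. rewrite ip_expand by (apply good_sub; auto). f_equal. ring.
Qed.

Lemma norm_orbit t f : good X f -> norm (orbit t f) = norm f.
Proof.
  intros; induction t; simpl; auto. unfold norm in *. rewrite V_iso; auto. apply good_orbit; auto.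
Qed.

Lemma coord_le_norm f a : good X f -> Rabs (f a) <= norm f.
Proof.
  intros Hf. unfold norm. rewrite <- sqrt_Rsqr_abs. apply sqrt_le_1_alt.
  unfold Rsqr; apply coord_le; auto.
Qed.

Lemma norm_cesaro T f : good X f -> norm (cesaro T f) <= norm f.
Proof.
  intros Hf. induction T.
  - rewrite (norm_ext _ f); [lra|]. intro; unfold cesaro; simpl. field.
  - rewrite (norm_ext _ _ (cesaro_S T f)).
    eapply Rle_trans.
    + apply norm_convex; [apply good_cesaro | apply good_orbit | apply avg_weight_bounds]; auto.
    + rewrite norm_orbit; auto. pose proof (avg_weight_bounds T). nra.
Qed.

Inductive hull (x : A -> R) (n : nat) : (A -> R) -> Prop :=
| hull_orbit t : (t <= n)%nat -> hull x n (orbit t x)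
| hull_convex f g l : 0 <= l <= 1 -> hull x n f -> hull x n g ->
    hull x n (fun a => l * f a + (1 - l) * g a).

Lemma hull_good x n f : good X x -> hull x n f -> good X f.
Proof. intros Hx H; induction H; [apply good_orbit | apply good_lin]; auto. Qed.

Lemma hull_mono x n m f : (n <= m)%nat -> hull x n f -> hull x m f.
Proof. intros Hm H; induction H; [apply hull_orbit; lia | apply hull_convex; auto]. Qed.

Lemma hull_V x n f : hull x n f -> hull x (S n) (V X f).
Proof.
  intros H; induction H.
  - apply (hull_orbit x (S n) (S t)); lia.
  - replace (V X (fun a => l * f a + (1 - l) * g a)) with (fun a => l * V X f a + (1 - l) * V X g a).
    + apply hull_convex; auto.
    + apply functional_extensionality; intro; rewrite V_lin; auto.
Qed.

Lemma hull_cesaro x n f T : hull x n f -> hull x (n + T) (cesaro T f).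
Proof.
  intros H. induction T.
  - replace (cesaro 0 f) with f.
    + rewrite Nat.add_0_r; auto.
    + apply functional_extensionality; intro; unfold cesaro; simpl; field.
  - replace (cesaro (S T) f) with
      (fun a => avg_weight T * cesaro T f a + (1 - avg_weight T) * orbit (S T) f a)
      by (apply functional_extensionality; intro; rewrite cesaro_S; auto).
    apply hull_convex; [apply avg_weight_bounds | apply (hull_mono _ (n + T)); auto; lia |].
    rewrite Nat.add_succ_r. apply hull_V. clear IHT.
    induction T; simpl; [rewrite Nat.add_0_r; auto | rewrite Nat.add_succ_r; apply hull_V; auto].
Qed.

(* Averages of [V^t x] and of [x] are [2 t |x| / (T+1)]-close; by convexity the
   same holds, with [t] replaced by [n], for any [f] in [hull x n]. *)
Lemma cesaro_orbit_close x T t : good X x ->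
  norm (fun a => cesaro T (orbit t x) a - cesaro T x a) <= 2 * INR t * norm x / INR (S T).
Proof.
  intros Hx. pose proof (INR_S_pos T) as HT. induction t as [|t IH].
  - rewrite (norm_ext _ (fun a => 0 * x a + 0 * x a)) by (intro; simpl; ring).
    unfold norm. rewrite ip_lin, Rmult_0_l, Rplus_0_l, sqrt_0 by (try apply good_lin; auto).
    simpl. unfold Rdiv; lra.
  - assert (Gt := good_orbit t x Hx).
    eapply Rle_trans; [apply (norm_triangle _ (cesaro T (orbit t x))); apply good_cesaro; auto;
                       apply good_orbit; auto |].
    set (u := / INR (S T)).
    assert (Hu : 0 <= u) by (left; apply Rinv_0_lt_compat; lra).
    rewrite (norm_ext (fun a => cesaro T (orbit (S t) x) a - cesaro T (orbit t x) a)
      (fun a => u * orbit (S T) (orbit t x) a + (- u) * orbit t x a)).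
    + eapply Rle_trans; [apply Rplus_le_compat_r, norm_lin; auto; apply good_orbit; auto |].
      rewrite !norm_orbit, Rabs_Ropp, Rabs_pos_eq by auto.
      unfold Rdiv in *. fold u in IH |- *. rewrite S_INR. lra.
    + intro a. simpl orbit at 1. rewrite cesaro_V. unfold u, Rdiv. ring.
Qed.

Lemma hull_close x n f T : good X x -> hull x n f ->
  norm (fun a => cesaro T f a - cesaro T x a) <= 2 * INR n * norm x / INR (S T).
Proof.
  intros Hx Hf. pose proof (INR_S_pos T). pose proof (norm_pos x).
  induction Hf as [t Ht | f g l Hl Hf IHf Hg IHg].
  - eapply Rle_trans; [apply cesaro_orbit_close; auto |].
    apply le_INR in Ht. unfold Rdiv.
    apply Rmult_le_compat_r; [left; apply Rinv_0_lt_compat; lra | nra].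
  - assert (Gf : good X f) by (apply (hull_good x n); auto).
    assert (Gg : good X g) by (apply (hull_good x n); auto).
    rewrite (norm_ext _ (fun a => l * (cesaro T f a - cesaro T x a)
                                  + (1 - l) * (cesaro T g a - cesaro T x a)))
      by (intro a; rewrite cesaro_lin; ring).
    eapply Rle_trans; [apply norm_convex; auto; apply good_sub; apply good_cesaro; auto | nra].
Qed.

Lemma hull_infimum x : good X x -> exists d, 0 <= d /\
  (forall n f, hull x n f -> d <= norm f) /\
  (forall del, 0 < del -> exists n f, hull x n f /\ norm f < d + del).
Proof.
  intros Hx.
  set (E := fun r => exists n f, hull x n f /\ r = - norm f).
  assert (HE : bound E).
  { exists 0. intros r [n [f [_ ->]]]. pose proof (norm_pos f); lra. }
  assert (HE2 : exists r, E r).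
  { exists (- norm x). exists 0%nat, x. split; auto. apply (hull_orbit x 0 0); auto. }
  destruct (completeness E HE HE2) as [m [Hub Hlub]].
  exists (- m). split; [|split].
  - apply Ropp_le_cancel. rewrite Ropp_involutive, Ropp_0.
    apply Hlub. intros r [n [f [_ ->]]]. pose proof (norm_pos f); lra.
  - intros n f Hf. assert (E (- norm f)) by (exists n, f; auto). apply Hub in H. lra.
  - intros del Hdel. apply NNPP. intro Hn.
    assert (is_upper_bound E (m - del)).
    { intros r [n [f [Hf ->]]]. destruct (Rle_or_lt (- m + del) (norm f)); [lra|].
      exfalso; apply Hn; exists n, f; auto. }
    apply Hlub in H. lra.
Qed.

(* Uniform convexity: two vectors of norm [< d + del] whose midpoint has norm
   [>= d] are at squared distance [< 4 del (2 d + del)] (parallelogram law). *)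
Lemma midpoint_close u v d del : good X u -> good X v -> 0 <= d -> 0 < del ->
  norm u < d + del -> norm v < d + del ->
  d <= norm (fun a => /2 * u a + (1 - /2) * v a) ->
  ip X (fun a => u a - v a) (fun a => u a - v a) < 4 * del * (2 * d + del).
Proof.
  intros Gu Gv Hd Hdel Nu Nv Nm.
  assert (Gm : good X (fun a => /2 * u a + (1 - /2) * v a)) by (apply good_lin; auto).
  assert (Sq : forall f, good X f -> norm f * norm f = ip X f f)
    by (intros; apply sqrt_sqrt, ip_pos; auto).
  rewrite (functional_extensionality (fun a => u a - v a) (fun a => 1 * u a + (-1) * v a))
    by (intro; ring).
  rewrite ip_expand by auto.
  pose proof (ip_expand u v (/2) (1 - /2) Gu Gv) as Em.
  rewrite <- !Sq in * by auto.
  pose proof (norm_pos u). pose proof (norm_pos v).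
  assert (norm u * norm u < (d + del) * (d + del)) by nra.
  assert (norm v * norm v < (d + del) * (d + del)) by nra.
  assert (d * d <= norm (fun a => /2 * u a + (1 - /2) * v a) * norm (fun a => /2 * u a + (1 - /2) * v a)) by nra.
  nra.
Qed.

Lemma cesaro_cauchy x : good X x -> forall eps, 0 < eps ->
  exists N, forall T U, (N <= T)%nat -> (N <= U)%nat ->
    norm (fun a => cesaro T x a - cesaro U x a) < eps.
Proof.
  intros Hx eps Heps.
  destruct (hull_infimum x Hx) as [d [Hd0 [Hd_low Hd_approx]]].
  set (del := Rmin 1 (eps * eps / (16 * (2 * d + 1)))).
  assert (Hdel : 0 < del) by (apply Rmin_pos; [lra | apply Rdiv_lt_0_compat; nra]).
  assert (Hdel_eps : 4 * del * (2 * d + del) <= eps / 2 * (eps / 2)).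
  { assert (del <= 1) by apply Rmin_l.
    assert (del * (16 * (2 * d + 1)) <= eps * eps).
    { pose proof (Rmin_r 1 (eps * eps / (16 * (2 * d + 1)))) as Hr. fold del in Hr.
      apply Rmult_le_compat_r with (r := 16 * (2 * d + 1)) in Hr; [|lra].
      unfold Rdiv in Hr. rewrite Rmult_assoc, Rinv_l in Hr; lra. }
    nra. }
  destruct (Hd_approx del Hdel) as [n [f [Hf Hfd]]].
  assert (Gf : good X f) by (apply (hull_good x n); auto).
  destruct (bounded_over_T_cv (fun _ => 2 * INR n * norm x) (Rabs (2 * INR n * norm x))
              (fun _ => Rle_refl _) (eps / 4)) as [N HN]; [lra|].
  exists N. intros T U HT HU.
  assert (side : forall T', (N <= T')%nat ->
     norm (fun a => cesaro T' f a - cesaro T' x a) < eps / 4).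
  { intros T' HT'. eapply Rle_lt_trans; [apply hull_close; eauto|].
    specialize (HN T' HT'). unfold R_dist in HN. rewrite Rminus_0_r in HN.
    eapply Rle_lt_trans; [apply Rle_abs | exact HN]. }
  set (uT := cesaro T f). set (uU := cesaro U f).
  assert (GT : good X uT) by (apply good_cesaro; auto).
  assert (GU : good X uU) by (apply good_cesaro; auto).
  assert (core : norm (fun a => uT a - uU a) < eps / 2).
  { apply sqrt_lt_aux; [lra|]. eapply Rlt_le_trans; [|exact Hdel_eps].
    apply (midpoint_close uT uU d del); auto.
    - eapply Rle_lt_trans; [apply norm_cesaro | ]; auto.
    - eapply Rle_lt_trans; [apply norm_cesaro | ]; auto.
    - apply (Hd_low (n + T + U)%nat). apply hull_convex; [lra | |].
      + apply (hull_mono _ (n + T)); [lia | apply hull_cesaro; auto].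
      + apply (hull_mono _ (n + U)); [lia | apply hull_cesaro; auto]. }
  eapply Rle_lt_trans; [apply (norm_triangle _ uT); auto; apply good_cesaro; auto|].
  eapply Rle_lt_trans; [apply Rplus_le_compat_l, (norm_triangle _ uU); auto;
                        apply good_cesaro; auto|].
  pose proof (side T HT) as ST. pose proof (side U HU) as SU.
  rewrite norm_sub_sym in ST by (auto; apply good_cesaro; auto).
  fold uT in ST. fold uU in SU. lra.
Qed.

Lemma cesaro_cv x a : good X x -> { l | Un_cv (fun T => cesaro T x a) l }.
Proof.
  intros Hx. apply R_complete. intros eps Heps.
  destruct (cesaro_cauchy x Hx eps Heps) as [N HN]. exists N. intros n m Hn Hm.
  unfold R_dist. eapply Rle_lt_trans; [|apply (HN n m Hn Hm)].
  apply (coord_le_norm (fun a => cesaro n x a - cesaro m x a)).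
  apply good_sub; apply good_cesaro; auto.
Qed.

Lemma V_cesaro_cv x l a : good X x ->
  Un_cv (fun T => cesaro T x a) l -> Un_cv (fun T => V X (cesaro T x) a) l.
Proof.
  intros Hx Hl.
  assert (Hrem : Un_cv (fun T => (orbit (S T) x a - x a) / INR (S T)) 0).
  { apply (bounded_over_T_cv _ (2 * norm x)). intro T.
    eapply Rle_trans; [apply Rabs_triang|]. rewrite Rabs_Ropp.
    pose proof (coord_le_norm _ a (good_orbit (S T) x Hx)).
    pose proof (coord_le_norm _ a Hx). rewrite norm_orbit in H by auto. lra. }
  pose proof (CV_plus _ _ _ _ Hl Hrem) as Hs. rewrite Rplus_0_r in Hs.
  apply (Un_cv_ext _ _ (fun T => eq_sym (eq_trans (V_cesaro T x a) (cesaro_V T x a))) l Hs).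
Qed.

End MeanErgodic.
Arguments orbit {A}. Arguments cesaro {A}. Arguments norm {A}.

(* Finitely supported functions on a graded type.  [trunc K F] sums [F] over
   the (finitely many) points of level [<= K]; the inner product of two
   finitely supported functions is the eventually constant value of these
   truncated sums. *)
Record Graded (A : Type) := {
  level : A -> nat;
  trunc : nat -> (A -> R) -> R;
  trunc_lin : forall K F G c d,
    trunc K (fun a => c * F a + d * G a) = c * trunc K F + d * trunc K G;
  trunc_nonneg : forall K F, (forall a, 0 <= F a) -> 0 <= trunc K F;
  trunc_term : forall K F a, (forall a, 0 <= F a) -> (level a <= K)%nat -> F a <= trunc K F;
  trunc_stable : forall K K' F, (forall a, (K < level a)%nat -> F a = 0) ->
    (K <= K')%nat -> trunc K' F = trunc K F
}.
Arguments level {A}. Arguments trunc {A}.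

Section FinitelySupported.
Variable A : Type.
Variable G : Graded A.

Definition supp (K : nat) (f : A -> R) : Prop := forall a, (K < level G a)%nat -> f a = 0.
Definition fsupp (f : A -> R) : Prop := exists K, supp K f.
Definition gip (f g : A -> R) : R :=
  Rbar.real (Lim_seq.Lim_seq (fun K => trunc G K (fun a => f a * g a))).

Lemma supp_mono K K' f : supp K f -> (K <= K')%nat -> supp K' f.
Proof. intros H HK a Ha. apply H; lia. Qed.

Lemma gip_eq K f g : supp K f -> gip f g = trunc G K (fun a => f a * g a).
Proof.
  intros H. unfold gip.
  rewrite (Lim_seq.Lim_seq_ext_loc _ (fun _ => trunc G K (fun a => f a * g a))).
  - rewrite Lim_seq.Lim_seq_const. reflexivity.
  - exists K. intros n Hn. apply trunc_stable; auto.
    intros a Ha. rewrite H; auto; ring.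
Qed.

Lemma fsupp_lin f g c d : fsupp f -> fsupp g -> fsupp (fun a => c * f a + d * g a).
Proof.
  intros [K1 H1] [K2 H2]. exists (max K1 K2). intros a Ha.
  rewrite H1, H2 by lia. ring.
Qed.

Lemma gip_sym f g : gip f g = gip g f.
Proof.
  unfold gip. replace (fun a => f a * g a) with (fun a => g a * f a); auto.
  apply functional_extensionality; intro; ring.
Qed.

Lemma gip_lin f g h c d : fsupp f -> fsupp g ->
  gip (fun a => c * f a + d * g a) h = c * gip f h + d * gip g h.
Proof.
  intros [K1 H1] [K2 H2].
  assert (S1 : supp (max K1 K2) f) by (apply (supp_mono K1); auto; lia).
  assert (S2 : supp (max K1 K2) g) by (apply (supp_mono K2); auto; lia).
  assert (S3 : supp (max K1 K2) (fun a => c * f a + d * g a))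
    by (intros a Ha; rewrite S1, S2 by auto; ring).
  rewrite (gip_eq _ _ _ S3), (gip_eq _ _ _ S1), (gip_eq _ _ _ S2).
  rewrite <- trunc_lin. f_equal. apply functional_extensionality; intro; ring.
Qed.

Lemma gip_pos f : fsupp f -> 0 <= gip f f.
Proof. intros [K H]. rewrite (gip_eq K); auto. apply trunc_nonneg. intro; nra. Qed.

Lemma gip_coord f a : fsupp f -> f a * f a <= gip f f.
Proof.
  intros [K H]. rewrite (gip_eq (max K (level G a))) by (apply (supp_mono K); auto; lia).
  apply (trunc_term _ G _ (fun a => f a * f a)); [intro; nra | lia].
Qed.

Definition graded_iso (W : (A -> R) -> (A -> R))
  (W_lin : forall f g c d a, W (fun a => c * f a + d * g a) a = c * W f a + d * W g a)
  (W_supp : forall K f, supp K f -> supp (S K) (W f))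
  (W_iso : forall K f, supp K f ->
     trunc G (S K) (fun a => W f a * W f a) = trunc G (S K) (fun a => f a * f a)) :
  IsoSpace A.
Proof.
  refine {| good := fsupp; ip := gip; V := W; good_lin := fsupp_lin; V_lin := W_lin;
            ip_sym := fun f g _ _ => gip_sym f g;
            ip_lin := fun f g h c d Hf Hg _ => gip_lin f g h c d Hf Hg;
            ip_pos := gip_pos; coord_le := gip_coord |}.
  - intros f [K HK]. exists (S K). apply W_supp; auto.
  - intros f [K HK].
    rewrite (gip_eq (S K)) by (apply W_supp; auto).
    rewrite (gip_eq (S K)) by (apply (supp_mono K); auto).
    apply W_iso; auto.
Defined.

End FinitelySupported.
Arguments supp {A}. Arguments fsupp {A}. Arguments gip {A}. Arguments gip_eq {A}.
Arguments supp_mono {A}. Arguments graded_iso {A}.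

(* Arcs are graded by [alev (Rt k) = alev (Lf k) = k], so that level [k] holds
   the two arcs between the vertices [k] and [k+1]. *)
Definition alev (e : arc) : nat := match e with Rt k => k | Lf k => k end.
Definition sumA (K : nat) (F : arc -> R) : R := sum_f_R0 (fun k => F (Rt k) + F (Lf k)) K.

Lemma sumA_ext K F G : (forall e, F e = G e) -> sumA K F = sumA K G.
Proof. intros H. f_equal. apply functional_extensionality; auto. Qed.

Lemma sumA_lin K F G c d : sumA K (fun e => c * F e + d * G e) = c * sumA K F + d * sumA K G.
Proof. unfold sumA; induction K; simpl; [|rewrite IHK]; ring. Qed.

Lemma sumA_zero K : sumA K (fun _ => 0) = 0.
Proof. unfold sumA; induction K; simpl; [|rewrite IHK]; ring. Qed.

Lemma sumA_nonneg K F : (forall e, 0 <= F e) -> 0 <= sumA K F.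
Proof.
  intros H; unfold sumA; induction K; simpl.
  - pose proof (H (Rt 0)); pose proof (H (Lf 0)); lra.
  - pose proof (H (Rt (S K))); pose proof (H (Lf (S K))); lra.
Qed.

Lemma sumA_mono K K' F : (forall e, 0 <= F e) -> (K <= K')%nat -> sumA K F <= sumA K' F.
Proof.
  intros H HK; induction HK; [lra|]. unfold sumA in *; simpl.
  pose proof (H (Rt (S m))); pose proof (H (Lf (S m))); lra.
Qed.

Lemma sumA_term K F e : (forall e, 0 <= F e) -> (alev e <= K)%nat -> F e <= sumA K F.
Proof.
  intros H He. eapply Rle_trans; [|apply (sumA_mono (alev e)); auto].
  pose proof (H (Rt (alev e))). pose proof (H (Lf (alev e))).
  assert (F (Rt (alev e)) + F (Lf (alev e)) <= sumA (alev e) F).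
  { unfold sumA. destruct (alev e); simpl; [lra|].
    pose proof (sumA_nonneg n F H). unfold sumA in H2. lra. }
  destruct e; simpl in *; lra.
Qed.

Lemma sumA_stable K K' F : (forall e, (K < alev e)%nat -> F e = 0) ->
  (K <= K')%nat -> sumA K' F = sumA K F.
Proof.
  intros H HK. induction HK; auto. unfold sumA in *. simpl. rewrite IHHK.
  rewrite (H (Rt (S m))), (H (Lf (S m))) by (simpl; lia). ring.
Qed.

Lemma sumA_plus K F G : sumA K (fun e => F e + G e) = sumA K F + sumA K G.
Proof. unfold sumA; induction K; simpl; [|rewrite IHK]; ring. Qed.

Lemma sumA_scal K F c : sumA K (fun e => c * F e) = c * sumA K F.
Proof. unfold sumA; induction K; simpl; [|rewrite IHK]; ring. Qed.

Lemma sumA_sum K (F : nat -> arc -> R) n :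
  sumA K (fun e => sum_f_R0 (fun t => F t e) n) = sum_f_R0 (fun t => sumA K (F t)) n.
Proof. induction n; simpl; [reflexivity | rewrite sumA_plus, IHn; reflexivity]. Qed.

Lemma sumA_swap K K' (P : arc -> arc -> R) :
  sumA K (fun e => sumA K' (fun e' => P e e')) = sumA K' (fun e' => sumA K (fun e => P e e')).
Proof.
  induction K.
  - unfold sumA at 1; simpl. rewrite <- sumA_plus. apply sumA_ext; intro; reflexivity.
  - unfold sumA at 1; simpl. fold (sumA K (fun e => sumA K' (fun e' => P e e'))).
    rewrite IHK, <- !sumA_plus. apply sumA_ext; intro. unfold sumA; simpl. ring.
Qed.

Definition arcs : Graded arc :=
  {| level := alev; trunc := sumA; trunc_lin := sumA_lin; trunc_nonneg := sumA_nonneg;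
     trunc_term := sumA_term; trunc_stable := sumA_stable |}.

Definition sumA2 (K : nat) (P : arc * arc -> R) : R :=
  sumA K (fun e => sumA K (fun e' => P (e, e'))).

Definition arc_pairs : Graded (arc * arc).
Proof.
  refine {| level := fun x => max (alev (fst x)) (alev (snd x)); trunc := sumA2 |}.
  - intros K F G c d. unfold sumA2. rewrite <- sumA_lin.
    apply sumA_ext; intro. apply sumA_lin.
  - intros K F HF. apply sumA_nonneg. intro. apply sumA_nonneg; auto.
  - intros K F [e e'] HF Hx. simpl in Hx.
    eapply Rle_trans; [|apply (sumA_term K (fun e0 => sumA K (fun e'0 => F (e0, e'0))) e)].
    + apply (sumA_term K (fun e'0 => F (e, e'0))); auto; lia.
    + intro; apply sumA_nonneg; auto.
    + lia.
  - intros K K' F HF HK. unfold sumA2.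
    rewrite (sumA_ext K' _ (fun e => sumA K (fun e' => F (e, e')))).
    + apply sumA_stable; auto. intros e He. rewrite <- (sumA_zero K).
      apply sumA_ext. intro e'. apply HF. simpl; lia.
    + intro e. apply sumA_stable; auto. intros e' He'. apply HF. simpl; lia.
Defined.

(* The real walk operator: [Ur p q] acts on real amplitudes exactly as [Uop p q]
   acts on complex ones, so [Uop] acts on real and imaginary parts separately. *)
Definition ipar (p q : nat -> R) (j : nat) (h : arc -> R) : R :=
  match j with
  | O => sqrt (p 0%nat) * h (Rt 0)
  | S k => sqrt (q j) * h (Lf k) + sqrt (p j) * h (Rt j)
  end.
Definition projAr (p q : nat -> R) (h : arc -> R) (e : arc) : R :=
  match e with
  | Rt j => sqrt (p j) * ipar p q j h
  | Lf j => sqrt (q (S j)) * ipar p q (S j) h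
  end.
Definition Ur (p q : nat -> R) (h : arc -> R) (e : arc) : R :=
  2 * projAr p q h (swap e) - h (swap e).

Fixpoint Urpow p q (t : nat) (h : arc -> R) : arc -> R :=
  match t with O => h | S t' => Ur p q (Urpow p q t' h) end.

Lemma Upow_re p q t (psi : state) e : re (Upow p q t psi e) = Urpow p q t (fun a => re (psi a)) e.
Proof.
  revert e; induction t; intro e; cbn [Upow Urpow]; auto.
  destruct e as [j|[|j]]; cbn; rewrite !IHt; reflexivity.
Qed.

Lemma Upow_im p q t (psi : state) e : im (Upow p q t psi e) = Urpow p q t (fun a => im (psi a)) e.
Proof.
  revert e; induction t; intro e; cbn [Upow Urpow]; auto.
  destruct e as [j|[|j]]; cbn; rewrite !IHt; reflexivity.
Qed.

Lemma Ur_lin p q f g c d e : Ur p q (fun a => c * f a + d * g a) e = c * Ur p q f e + d * Ur p q g e.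
Proof. destruct e as [j|[|j]]; unfold Ur, projAr, ipar; simpl; ring. Qed.

Lemma Ur_scal p q f c e : Ur p q (fun a => c * f a) e = c * Ur p q f e.
Proof. destruct e as [j|[|j]]; unfold Ur, projAr, ipar; simpl; ring. Qed.

Lemma Ur_zero p q e : Ur p q (fun _ => 0) e = 0.
Proof. destruct e as [j|[|j]]; unfold Ur, projAr, ipar; simpl; ring. Qed.

Lemma Ur_supp p q K f : supp arcs K f -> supp arcs (S K) (Ur p q f).
Proof.
  intros H e He. destruct e as [j|j]; simpl in He; unfold Ur, projAr, ipar; simpl.
  - rewrite (H (Lf j)), (H (Rt (S j))) by (simpl; lia). ring.
  - destruct j; [lia|]. rewrite (H (Lf j)), (H (Rt (S j))) by (simpl; lia). ring.
Qed.

Record walk_params (p q : nat -> R) : Prop := {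
  wp_p_nonneg : forall k, 0 <= p k;
  wp_q_nonneg : forall k, 0 <= q k;
  wp_sum : forall k, p k + q k = 1;
  wp_q0 : q 0%nat = 0;
  wp_p_pos : forall k, 0 < p k;
  wp_q_pos : forall k, 0 < q (S k)
}.

Section Walk.
Variables p q : nat -> R.
Hypothesis H : walk_params p q.

Lemma sqrt_p_sq k : sqrt (p k) * sqrt (p k) = p k.
Proof. apply sqrt_sqrt, (wp_p_nonneg _ _ H). Qed.

Lemma sqrt_q_sq k : sqrt (q k) * sqrt (q k) = q k.
Proof. apply sqrt_sqrt, (wp_q_nonneg _ _ H). Qed.

Lemma p0_1 : p 0%nat = 1.
Proof. pose proof (wp_sum _ _ H 0); rewrite (wp_q0 _ _ H) in H0; lra. Qed.

Lemma sqrt_p0 : sqrt (p 0%nat) = 1.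
Proof. rewrite p0_1; apply sqrt_1. Qed.

(* At each vertex the coin is a reflection, hence preserves the (bilinear)
   pairing of the two arc amplitudes leaving that vertex. *)
Lemma reflection_id a b x y x' y' :
  a * a + b * b = 1 ->
  (2 * (b * (b * y + a * x)) - y) * (2 * (b * (b * y' + a * x')) - y') +
  (2 * (a * (b * y + a * x)) - x) * (2 * (a * (b * y' + a * x')) - x') = y * y' + x * x'.
Proof.
  intros Hab.
  transitivity (4 * (a*a+b*b - 1) * (b*y + a*x) * (b*y'+a*x') + (y * y' + x * x')); [ring|].
  rewrite Hab. ring.
Qed.

(* Summing the vertex identities up to level [K]: truncation errors only
   occur at the boundary arcs [Lf K] and [Rt K]. *)
Lemma Ur_pairing_trunc f g K :
  sumA K (fun e => Ur p q f e * Ur p q g e) + f (Lf K) * g (Lf K) =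
  sumA K (fun e => f e * g e) + Ur p q f (Rt K) * Ur p q g (Rt K).
Proof.
  induction K.
  - unfold sumA, Ur, projAr, ipar; simpl. rewrite sqrt_p0. ring.
  - unfold sumA in *; simpl.
    assert (Ur p q f (Rt K) * Ur p q g (Rt K) + Ur p q f (Lf (S K)) * Ur p q g (Lf (S K))
       = f (Lf K) * g (Lf K) + f (Rt (S K)) * g (Rt (S K))).
    { unfold Ur, projAr, ipar; simpl. apply reflection_id.
      rewrite sqrt_p_sq, sqrt_q_sq. pose proof (wp_sum _ _ H (S K)); lra. }
    lra.
Qed.

Lemma Ur_pairing f g K K' : supp arcs K f -> (K < K')%nat ->
  sumA K' (fun e => Ur p q f e * Ur p q g e) = sumA K' (fun e => f e * g e).
Proof.
  intros Hf HK. pose proof (Ur_pairing_trunc f g K').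
  assert (Hb : Ur p q f (Rt K') = 0).
  { unfold Ur, projAr, ipar; simpl. rewrite (Hf (Lf K')), (Hf (Rt (S K'))) by (simpl; lia). ring. }
  rewrite Hb, (Hf (Lf K')) in H0 by (simpl; lia). lra.
Qed.

Definition Ws (s : R) (f : arc -> R) (e : arc) : R := s * Ur p q f e.

Definition walk_space (s : R) (Hs : s * s = 1) : IsoSpace arc.
Proof.
  refine (graded_iso arcs (Ws s) _ _ _).
  - intros f g c d e. unfold Ws. rewrite Ur_lin. ring.
  - intros K f Hf e He. unfold Ws. rewrite (Ur_supp p q K f Hf); auto; ring.
  - intros K f Hf. simpl. rewrite <- (Ur_pairing f f K (S K)) by auto.
    apply sumA_ext; intro e. unfold Ws.
    transitivity ((s * s) * (Ur p q f e * Ur p q f e)); [ring | rewrite Hs; ring].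
Defined.

Lemma walk_orbit s Hs t f e : orbit (walk_space s Hs) t f e = s ^ t * Urpow p q t f e.
Proof.
  revert e; induction t; intro e; simpl; [ring|].
  unfold Ws. replace (orbit (walk_space s Hs) t f) with (fun a => s ^ t * Urpow p q t f a)
    by (apply functional_extensionality; intro; rewrite IHt; auto).
  rewrite Ur_scal. ring.
Qed.

Definition U2 (F : arc * arc -> R) (x : arc * arc) : R :=
  Ur p q (fun f => Ur p q (fun f' => F (f, f')) (snd x)) (fst x).

Definition pair_space : IsoSpace (arc * arc).
Proof.
  assert (Hsupp : forall K F, supp arc_pairs K F -> forall e, supp arcs K (fun f => F (e, f))).
  { intros K F HF e f Hf. apply HF. simpl in *; lia. }
  refine (graded_iso arc_pairs U2 _ _ _).
  - intros F G c d [e e']. unfold U2; simpl.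
    rewrite <- Ur_lin. f_equal. apply functional_extensionality; intro. apply Ur_lin.
  - intros K F HF [e e'] Hx. simpl in Hx. unfold U2; simpl.
    destruct (Nat.max_spec (alev e) (alev e')) as [[_ E]|[_ E]]; rewrite E in Hx.
    + rewrite <- (Ur_zero p q e). f_equal. apply functional_extensionality; intro f.
      apply (Ur_supp p q K); [apply Hsupp; auto | simpl; lia].
    + apply (Ur_supp p q K); [|simpl; lia]. intros f Hf.
      rewrite <- (Ur_zero p q e'). f_equal. apply functional_extensionality; intro f'.
      apply HF. simpl in *; lia.
  - intros K F HF. simpl. unfold sumA2, U2; simpl.
    rewrite sumA_swap.
    rewrite (sumA_ext (S K) _ (fun e' => sumA (S K) (fun f =>
      Ur p q (fun f' => F (f, f')) e' * Ur p q (fun f' => F (f, f')) e'))).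
    + rewrite sumA_swap. apply sumA_ext; intro f. apply (Ur_pairing _ _ K); auto.
    + intro e'. apply (Ur_pairing _ _ K); auto. intros f Hf.
      rewrite <- (Ur_zero p q e'). f_equal. apply functional_extensionality; intro f'.
      apply HF. simpl in *; lia.
Defined.

Lemma pair_orbit t f x :
  orbit pair_space t (fun x => f (fst x) * f (snd x)) x = Urpow p q t f (fst x) * Urpow p q t f (snd x).
Proof.
  revert x; induction t; intro x; simpl; auto.
  replace (orbit pair_space t (fun x => f (fst x) * f (snd x))) with
    (fun x => Urpow p q t f (fst x) * Urpow p q t f (snd x))
    by (apply functional_extensionality; intro; rewrite IHt; auto).
  unfold U2. simpl.
  replace (fun f0 => Ur p q (fun f' => Urpow p q t f f0 * Urpow p q t f f') (snd x)) with
    (fun f0 => Urpow p q t f f0 * Ur p q (Urpow p q t f) (snd x))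
    by (apply functional_extensionality; intro; rewrite Ur_scal; auto).
  set (c := Ur p q (Urpow p q t f) (snd x)).
  transitivity (Ur p q (fun a => c * Urpow p q t f a) (fst x)).
  - f_equal. apply functional_extensionality; intro; ring.
  - rewrite Ur_scal. ring.
Qed.

#[local] Arguments wgt : simpl never.

Lemma wgt_pos k : 0 < wgt p q k.
Proof.
  induction k; [change (0 < 1); lra|].
  change (wgt p q (S k)) with (wgt p q k * p k / q (S k)). unfold Rdiv.
  apply Rmult_lt_0_compat; [apply Rmult_lt_0_compat; auto; apply (wp_p_pos _ _ H)|].
  apply Rinv_0_lt_compat, (wp_q_pos _ _ H).
Qed.

Lemma detailed_balance k : wgt p q (S k) * q (S k) = wgt p q k * p k.
Proof.
  change (wgt p q (S k)) with (wgt p q k * p k / q (S k)). field.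
  pose proof (wp_q_pos _ _ H k); lra.
Qed.

Lemma sqrt_balance k :
  sqrt (wgt p q k) * sqrt (p k) = sqrt (wgt p q (S k)) * sqrt (q (S k)).
Proof.
  pose proof (wgt_pos k). pose proof (wgt_pos (S k)).
  rewrite <- !sqrt_mult; try lra; try apply (wp_p_nonneg _ _ H); try apply (wp_q_nonneg _ _ H).
  rewrite detailed_balance; auto.
Qed.

Definition psi (s : R) (e : arc) : R :=
  match e with
  | Rt k => s ^ k * (sqrt (wgt p q k) * sqrt (p k))
  | Lf k => s ^ (S k) * (sqrt (wgt p q k) * sqrt (p k))
  end.

Lemma psi_Rt0 s : psi s (Rt 0) = 1.
Proof. unfold psi. rewrite sqrt_p0. change (wgt p q 0) with 1. rewrite sqrt_1. simpl; ring. Qed.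

Lemma psi_fixed s (Hs : s * s = 1) e : s * Ur p q (psi s) e = psi s e.
Proof.
  pose proof sqrt_p_sq as SP. pose proof sqrt_q_sq as SQ. pose proof (wp_sum _ _ H) as PQ.
  destruct e as [k|[|k]]; unfold Ur, projAr, ipar, psi, swap.
  - rewrite !(sqrt_balance k).
    transitivity (s * s * (s ^ k * (sqrt (wgt p q (S k)) * sqrt (q (S k)))) *
      (2 * (sqrt (q (S k)) * sqrt (q (S k)) + sqrt (p (S k)) * sqrt (p (S k))) - 1)); [simpl; ring|].
    rewrite Hs, SP, SQ, (Rplus_comm (q _)), PQ. ring.
  - rewrite sqrt_p0. simpl; ring.
  - rewrite !(sqrt_balance k).
    transitivity (s * (s ^ S k * (sqrt (wgt p q (S k)) * sqrt (p (S k)))) *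
      (2 * (sqrt (q (S k)) * sqrt (q (S k)) + sqrt (p (S k)) * sqrt (p (S k))) - 1)); [simpl; ring|].
    rewrite SP, SQ, (Rplus_comm (q _)), PQ. simpl; ring.
Qed.

(* An invariant vector vanishing on [Rt 0] vanishes everywhere: the
   invariance equations determine the amplitudes level by level. *)
Lemma fixed_vanish s (Hs : s * s = 1) g :
  (forall e, s * Ur p q g e = g e) -> g (Rt 0) = 0 -> forall k, g (Rt k) = 0 /\ g (Lf k) = 0.
Proof.
  intros Hf H0. induction k as [|k [H1 H2]].
  - split; auto. rewrite <- (Hf (Lf 0)). unfold Ur, projAr, ipar, swap. rewrite H0. ring.
  - assert (E1 := Hf (Rt k)). unfold Ur, projAr, ipar, swap in E1. rewrite H1, H2 in E1.
    assert (P1 : 0 < sqrt (q (S k))) by (apply sqrt_lt_R0, (wp_q_pos _ _ H)).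
    assert (P2 : 0 < sqrt (p (S k))) by (apply sqrt_lt_R0, (wp_p_pos _ _ H)).
    assert (Hr : g (Rt (S k)) = 0).
    { assert (E : (s * (2 * (sqrt (q (S k)) * sqrt (p (S k))))) * g (Rt (S k)) = 0)
        by (rewrite <- E1; ring).
      apply Rmult_integral in E as [E|E]; auto.
      apply Rmult_integral in E as [E|E]; [subst; lra | nra]. }
    split; auto. rewrite <- (Hf (Lf (S k))). unfold Ur, projAr, ipar, swap. rewrite H2, Hr. ring.
Qed.

Lemma fixed_unique s (Hs : s * s = 1) h :
  (forall e, s * Ur p q h e = h e) -> forall e, h e = h (Rt 0) * psi s e.
Proof.
  intros Hf. set (g := fun e => 1 * h e + (- h (Rt 0)) * psi s e).
  assert (Hg : forall e, s * Ur p q g e = g e).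
  { intro e. unfold g. rewrite Ur_lin.
    transitivity (1 * (s * Ur p q h e) + (- h (Rt 0)) * (s * Ur p q (psi s) e)); [ring|].
    rewrite Hf, psi_fixed; auto. }
  assert (G0 : g (Rt 0) = 0) by (unfold g; rewrite psi_Rt0; ring).
  intro e. pose proof (fixed_vanish s Hs g Hg G0) as Z.
  destruct e as [k|k]; destruct (Z k); unfold g in *; lra.
Qed.

Lemma pow_sign_sq s k : s * s = 1 -> s ^ k * s ^ k = 1.
Proof. intros Hs. rewrite <- Rpow_mult_distr, Hs. apply pow1. Qed.

Lemma psi_sq s (Hs : s * s = 1) e : psi s e * psi s e = wgt p q (alev e) * p (alev e).
Proof.
  pose proof (wgt_pos (alev e)).
  assert (E : forall n, (s ^ n * (sqrt (wgt p q (alev e)) * sqrt (p (alev e)))) *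
                        (s ^ n * (sqrt (wgt p q (alev e)) * sqrt (p (alev e))))
                        = wgt p q (alev e) * p (alev e)).
  { intro n. transitivity ((s ^ n * s ^ n) * (sqrt (wgt p q (alev e)) * sqrt (wgt p q (alev e)))
                           * (sqrt (p (alev e)) * sqrt (p (alev e)))); [ring|].
    rewrite pow_sign_sq, sqrt_sqrt, sqrt_p_sq by (auto; lra). ring. }
  destruct e; apply E.
Qed.

Lemma psi_vertex s (Hs : s * s = 1) i :
  psi s (Rt i) * psi s (Rt i) + match i with O => 0 | S k => psi s (Lf k) * psi s (Lf k) end
  = wgt p q i.
Proof.
  rewrite psi_sq by auto. simpl alev. destruct i.
  - rewrite p0_1. lra.
  - rewrite psi_sq by auto. simpl alev. rewrite <- (detailed_balance i).
    pose proof (wp_sum _ _ H (S i)).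
    transitivity (wgt p q (S i) * (p (S i) + q (S i))); [ring | rewrite H0; ring].
Qed.

Lemma wgt_partial_le CR (HCR : infinite_sum (fun n => wgt p q (S n)) CR) K :
  sum_f_R0 (wgt p q) (S K) <= 1 + CR.
Proof.
  rewrite decomp_sum by lia. simpl pred. change (wgt p q 0) with 1.
  assert (sum_f_R0 (fun i => wgt p q (S i)) K <= CR); [|lra].
  apply growing_ineq; auto. intro n. simpl. pose proof (wgt_pos (S (S n))). lra.
Qed.

Lemma CR_pos CR (HCR : infinite_sum (fun n => wgt p q (S n)) CR) : 0 < CR.
Proof.
  pose proof (wgt_partial_le CR HCR 0) as Hle. simpl in Hle. change (wgt p q 0) with 1 in Hle.
  pose proof (wgt_pos 1). lra.
Qed.

Lemma psi_trunc_norm s (Hs : s * s = 1) CR (HCR : infinite_sum (fun n => wgt p q (S n)) CR) K :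
  0 <= sumA K (fun e => psi s e * psi s e) <= 1 + CR.
Proof.
  split; [apply sumA_nonneg; intro; nra|].
  assert (E : sumA K (fun e => psi s e * psi s e)
              = sum_f_R0 (wgt p q) K + wgt p q (S K) * q (S K)).
  { unfold sumA.
    rewrite (sum_eq _ (fun k => wgt p q k * p k + wgt p q k * p k))
      by (intros; rewrite !psi_sq by auto; reflexivity).
    induction K; simpl sum_f_R0.
    - rewrite detailed_balance, p0_1. change (wgt p q 0) with 1. ring.
    - rewrite IHK, (detailed_balance (S K)). pose proof (wp_sum _ _ H (S K)).
      transitivity (sum_f_R0 (wgt p q) K + wgt p q (S K) * (p (S K) + q (S K))
                    + wgt p q (S K) * p (S K)); [ring | rewrite H0; ring]. }
  pose proof (wgt_partial_le CR HCR K). simpl in H0. pose proof (wgt_pos (S K)).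
  pose proof (wp_sum _ _ H (S K)). pose proof (wp_p_nonneg _ _ H (S K)). nra.
Qed.

Lemma sum_single (g : nat -> R) k0 n :
  (forall k, k <> k0 -> g k = 0) -> (k0 <= n)%nat -> sum_f_R0 g n = g k0.
Proof.
  intros Hg Hn. induction n.
  - assert (k0 = 0%nat) by lia. subst. reflexivity.
  - destruct (Nat.eq_dec k0 (S n)).
    + subst. simpl. rewrite (sum_eq _ (fun _ => 0)), sum_cte by (intros; apply Hg; lia). ring.
    + simpl. rewrite IHn, (Hg (S n)) by lia. ring.
Qed.

Lemma psi_pairing_local s (Hs : s * s = 1) f j :
  (forall e, tail e <> j -> f e = 0) ->
  sumA j (fun e => f e * psi s e) * sumA j (fun e => f e * psi s e)
  = wgt p q j * (ipar p q j f * ipar p q j f).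
Proof.
  intros Hf.
  assert (E : sumA j (fun e => f e * psi s e) = s ^ j * sqrt (wgt p q j) * ipar p q j f).
  { unfold sumA. rewrite sum_plus. destruct j.
    - simpl. rewrite (Hf (Lf 0)) by (simpl; lia). ring.
    - rewrite (sum_single _ (S j)), (sum_single (fun k => f (Lf k) * psi s (Lf k)) j);
        try lia; try (intros k Hk; rewrite Hf; [ring | simpl; lia]).
      unfold psi, ipar. rewrite (sqrt_balance j). ring. }
  rewrite E. pose proof (pow_sign_sq s j Hs). pose proof (wgt_pos j).
  transitivity ((s^j * s^j) * (sqrt (wgt p q j) * sqrt (wgt p q j)) * (ipar p q j f * ipar p q j f));
    [ring|].
  rewrite H0, sqrt_sqrt by lra. ring.
Qed.

End Walk.

Lemma cv_le_eventually u l b N : Un_cv u l -> (forall n, (N <= n)%nat -> u n <= b) -> l <= b.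
Proof.
  intros Hu Hb. destruct (Rle_or_lt l b); auto. exfalso.
  destruct (Hu (l - b)) as [M HM]; [lra|].
  specialize (HM (max N M) ltac:(lia)). specialize (Hb (max N M) ltac:(lia)).
  unfold R_dist in HM. apply Rabs_def2 in HM. lra.
Qed.

Lemma alternating_sum T : sum_f_R0 (fun t => (-1) ^ t) T = (1 + (-1) ^ T) / 2.
Proof. induction T; simpl sum_f_R0; [simpl; field | rewrite IHT; simpl; field]. Qed.

Lemma alternating_cesaro_cv : Un_cv (fun T => sum_f_R0 (fun t => (-1) ^ t) T / INR (S T)) 0.
Proof.
  apply (bounded_over_T_cv _ 1). intro T. rewrite alternating_sum.
  unfold Rdiv. rewrite Rabs_mult, (Rabs_pos_eq (/2)) by lra.
  pose proof (Rabs_triang 1 ((-1) ^ T)). rewrite Rabs_R1, pow_1_abs in H. lra.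
Qed.

(* If [u] has Cesaro mean [alpha], its alternating version [(-1)^t u_t] has
   Cesaro mean [beta] and [u^2] has Cesaro mean [L], then [L >= alpha^2 + beta^2]
   (average the inequality [(u_t - alpha - (-1)^t beta)^2 >= 0]). *)
Lemma cesaro_square_lower (u : nat -> R) alpha beta L :
  Un_cv (fun T => sum_f_R0 u T / INR (S T)) alpha ->
  Un_cv (fun T => sum_f_R0 (fun t => (-1) ^ t * u t) T / INR (S T)) beta ->
  Un_cv (fun T => sum_f_R0 (fun t => u t * u t) T / INR (S T)) L ->
  alpha * alpha + beta * beta <= L.
Proof.
  intros Ha Hb HL.
  set (lower := fun T => 2 * alpha * (sum_f_R0 u T / INR (S T))
                 + 2 * beta * (sum_f_R0 (fun t => (-1) ^ t * u t) T / INR (S T))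
                 - alpha * alpha - beta * beta
                 - 2 * alpha * beta * (sum_f_R0 (fun t => (-1) ^ t) T / INR (S T))).
  replace (alpha * alpha + beta * beta) with
    (2 * alpha * alpha + 2 * beta * beta - alpha * alpha - beta * beta - 2 * alpha * beta * 0)
    by ring.
  apply (Rle_cv_lim (Un := lower) (Vn := fun T => sum_f_R0 (fun t => u t * u t) T / INR (S T))); auto.
  - intro T. unfold lower. pose proof (INR_S_pos T).
    assert (Hpt : forall t, 2 * alpha * u t + 2 * beta * ((-1) ^ t * u t) - alpha * alpha
                  - beta * beta - 2 * alpha * beta * (-1) ^ t <= u t * u t).
    { intro t. pose proof (pow_sign_sq (-1) t ltac:(ring)).
      pose proof (Rle_0_sqr (u t - alpha - (-1) ^ t * beta)). unfold Rsqr in *. nra. }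
    pose proof (sum_Rle _ _ T (fun t _ => Hpt t)) as Hs.
    rewrite !minus_sum, sum_cte, !sum_plus, !sum_scal, sum_cte in Hs.
    assert (E : lower T = (2 * alpha * sum_f_R0 u T + 2 * beta * sum_f_R0 (fun t => (-1) ^ t * u t) T
       - alpha * alpha * INR (S T) - beta * beta * INR (S T)
       - 2 * alpha * beta * sum_f_R0 (fun t => (-1) ^ t) T) / INR (S T)) by (unfold lower; field; lra).
    change (lower T <= sum_f_R0 (fun t => u t * u t) T / INR (S T)).
    rewrite E. unfold Rdiv. apply Rmult_le_compat_r; [left; apply Rinv_0_lt_compat; lra|].
    change (sum_f_R0 (pow (-1)) T) with (sum_f_R0 (fun t => (-1) ^ t) T) in Hs. lra.
  - unfold lower. repeat apply CV_minus; try apply CV_plus; try apply CV_mult;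
      auto using cst_cv, alternating_cesaro_cv.
Qed.

Lemma Ur_cv p q (F : nat -> arc -> R) G e :
  (forall a, Un_cv (fun n => F n a) (G a)) -> Un_cv (fun n => Ur p q (F n) e) (Ur p q G e).
Proof.
  intros HF. destruct e as [k|[|k]]; unfold Ur, projAr, ipar, swap;
  repeat first [ apply CV_minus | apply CV_plus | apply CV_mult | apply cst_cv | apply HF ].
Qed.

Lemma sumA_cv K (F : nat -> arc -> R) G :
  (forall a, Un_cv (fun n => F n a) (G a)) -> Un_cv (fun n => sumA K (F n)) (sumA K G).
Proof. intros HF. unfold sumA. induction K; simpl; repeat apply CV_plus; auto. Qed.

Lemma sumA_cauchy_schwarz K f g :
  sumA K (fun e => f e * g e) * sumA K (fun e => f e * g e)
  <= sumA K (fun e => f e * f e) * sumA K (fun e => g e * g e).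
Proof.
  apply quadratic_form_cs. intros x y.
  assert (E : sumA K (fun e => (x * f e + y * g e) * (x * f e + y * g e)) =
    x * x * sumA K (fun e => f e * f e) + 2 * x * y * sumA K (fun e => f e * g e)
    + y * y * sumA K (fun e => g e * g e)).
  { rewrite (sumA_ext K _ (fun e => (x * x) * (f e * f e)
       + 1 * ((2 * x * y) * (f e * g e) + (y * y) * (g e * g e)))) by (intro; ring).
    rewrite !sumA_lin. ring. }
  rewrite <- E. apply sumA_nonneg. intro; apply Rle_0_sqr.
Qed.

Lemma approx_bound beta c N : 0 < N ->
  (forall eps, 0 < eps -> exists r, 0 <= r <= N /\ (beta - c * r) * (beta - c * r) <= eps) ->
  beta * beta <= c * c * (N * N).
Proof.
  intros HN Happ. apply Rnot_lt_le. intro Hlt.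
  assert (Hb : Rabs c * N < Rabs beta).
  { assert (Hc2 : Rabs c * Rabs c = c * c) by (rewrite <- Rabs_mult; apply Rabs_pos_eq; nra).
    assert (Hb2 : Rabs beta * Rabs beta = beta * beta)
      by (rewrite <- Rabs_mult; apply Rabs_pos_eq; nra).
    pose proof (Rabs_pos c). pose proof (Rabs_pos beta).
    destruct (Rlt_or_le (Rabs c * N) (Rabs beta)) as [|Hle]; auto. exfalso.
    assert (Rabs beta * Rabs beta <= (Rabs c * N) * (Rabs c * N))
      by (apply Rmult_le_compat; auto). nra. }
  set (d := Rabs beta - Rabs c * N).
  destruct (Happ (d * d / 2)) as [r [[Hr0 HrN] Hr]]; [unfold d; nra|].
  assert (Hd : d <= Rabs (beta - c * r)).
  { assert (Rabs (c * r) <= Rabs c * N).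
    { rewrite Rabs_mult, (Rabs_pos_eq r) by lra. apply Rmult_le_compat_l; auto using Rabs_pos. }
    pose proof (Rabs_triang_inv beta (c * r)). unfold d; lra. }
  assert (d * d <= (beta - c * r) * (beta - c * r)).
  { rewrite <- (Rabs_pos_eq d) in Hd by (unfold d; lra).
    apply Rsqr_le_abs_1 in Hd. unfold Rsqr in Hd. auto. }
  assert (0 < d) by (unfold d; lra). nra.
Qed.

Section WalkCesaro.
Variables p q : nat -> R.
Hypothesis H : walk_params p q.
Variable CR : R.
Hypothesis HCR : infinite_sum (fun n => wgt p q (S n)) CR.

Lemma walk_orbit_supp s Hs K0 f t :
  supp arcs K0 f -> supp arcs (K0 + t) (orbit (walk_space p q H s Hs) t f).
Proof.
  intros Hf. induction t; simpl; [rewrite Nat.add_0_r; auto|].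
  intros e He. unfold Ws. rewrite (Ur_supp p q (K0 + t)); auto; [ring | lia].
Qed.

Lemma orbit_pairing s Hs f K0 K t : supp arcs K0 f -> (K0 + t < K)%nat ->
  sumA K (fun e => orbit (walk_space p q H s Hs) t f e * psi p q s e)
  = sumA K (fun e => f e * psi p q s e).
Proof.
  intros Hf. induction t; intros HK; simpl; auto.
  rewrite <- IHt by lia. unfold Ws.
  rewrite <- (Ur_pairing p q H (orbit (walk_space p q H s Hs) t f) (psi p q s) (K0 + t) K)
    by (try apply walk_orbit_supp; auto; lia).
  apply sumA_ext. intro e. rewrite <- (psi_fixed p q H s Hs e) at 1.
  set (g := orbit (walk_space p q H s Hs) t f).
  transitivity ((s * s) * (Ur p q g e * Ur p q (psi p q s) e)); [ring | rewrite Hs; ring].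
Qed.

Lemma cesaro_pairing s Hs f K0 K T : supp arcs K0 f -> (K0 + T < K)%nat ->
  sumA K (fun e => cesaro (walk_space p q H s Hs) T f e * psi p q s e)
  = sumA K (fun e => f e * psi p q s e).
Proof.
  intros Hf HK. unfold cesaro.
  rewrite (sumA_ext K _ (fun e => / INR (S T) *
    sum_f_R0 (fun t => orbit (walk_space p q H s Hs) t f e * psi p q s e) T)).
  - rewrite sumA_scal, sumA_sum.
    rewrite (sum_eq _ (fun _ => sumA K (fun e => f e * psi p q s e)))
      by (intros; apply (orbit_pairing _ _ _ K0); auto; lia).
    rewrite sum_cte. field. pose proof (INR_S_pos T); lra.
  - intro e. rewrite <- sum_scal.
    transitivity (psi p q s e * / INR (S T) * sum_f_R0 (fun t => orbit (walk_space p q H s Hs) t f e) T);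
      [unfold Rdiv; ring|].
    rewrite <- sum_scal. apply sum_eq; intros; ring.
Qed.

Lemma walk_cesaro_limit s Hs f : fsupp arcs f ->
  exists c, forall e, Un_cv (fun T => cesaro (walk_space p q H s Hs) T f e) (c * psi p q s e).
Proof.
  intros Gf. set (W := walk_space p q H s Hs).
  set (z := fun e => proj1_sig (cesaro_cv _ W f e Gf)).
  assert (Hz : forall e, Un_cv (fun T => cesaro W T f e) (z e))
    by (intro e; unfold z; destruct (cesaro_cv _ W f e Gf); auto).
  assert (Zfix : forall e, s * Ur p q z e = z e).
  { intro e. apply (UL_sequence (fun T => V W (cesaro W T f) e)).
    - apply CV_mult; [apply cst_cv | apply Ur_cv; auto].
    - apply V_cesaro_cv; auto. }
  exists (z (Rt 0)). intro e. rewrite <- (fixed_unique p q H s Hs z Zfix). auto.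
Qed.

(* Size of the limit: [<f, psi s>^2 <= c^2 (1 + C_R)^2].  The pairing with
   [psi s] is conserved by averaging, the averages are norm-Cauchy and the
   truncated norms of [psi s] are at most [1 + C_R]. *)
Lemma walk_cesaro_bound s Hs f K0 c : supp arcs K0 f ->
  (forall e, Un_cv (fun T => cesaro (walk_space p q H s Hs) T f e) (c * psi p q s e)) ->
  sumA K0 (fun e => f e * psi p q s e) * sumA K0 (fun e => f e * psi p q s e)
  <= c * c * ((1 + CR) * (1 + CR)).
Proof.
  intros Hf Hc. set (W := walk_space p q H s Hs).
  assert (Gf : fsupp arcs f) by (exists K0; auto).
  assert (HN : 0 < 1 + CR) by (pose proof (CR_pos p q H CR HCR); lra).
  apply approx_bound; auto. intros eps Heps.
  set (eps' := eps / (1 + CR)).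
  assert (Heps' : 0 < eps') by (apply Rdiv_lt_0_compat; lra).
  destruct (cesaro_cauchy _ W f Gf (sqrt eps') (sqrt_lt_R0 _ Heps')) as [N HNc].
  set (K := S (K0 + N)).
  set (d := fun e => cesaro W N f e - c * psi p q s e).
  assert (Hd : sumA K (fun e => d e * d e) <= eps').
  { apply (cv_le_eventually (fun U => sumA K (fun e =>
      (cesaro W N f e - cesaro W U f e) * (cesaro W N f e - cesaro W U f e))) _ _ N).
    - apply sumA_cv. intro e. apply CV_mult; apply CV_minus; auto using cst_cv.
    - intros U HU. specialize (HNc N U (le_n N) HU).
      assert (Gd : fsupp arcs (fun a => cesaro W N f a - cesaro W U f a))
        by (apply (good_sub _ W); apply good_cesaro; auto).
      destruct Gd as [K1 HK1].
      apply Rle_trans with (gip arcs (fun a => cesaro W N f a - cesaro W U f a)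
                                     (fun a => cesaro W N f a - cesaro W U f a)).
      + rewrite (gip_eq _ (max K K1)) by (apply (supp_mono _ K1); auto; lia).
        apply sumA_mono; [intro; apply Rle_0_sqr | lia].
      + unfold norm in HNc. apply sqrt_lt_0_alt in HNc. left; exact HNc. }
  set (qK := sumA K (fun e => psi p q s e * psi p q s e)).
  exists qK. split; [apply (psi_trunc_norm p q H s Hs CR HCR K)|].
  assert (E : sumA K (fun e => d e * psi p q s e) = sumA K0 (fun e => f e * psi p q s e) - c * qK).
  { rewrite (sumA_ext K _ (fun e => 1 * (cesaro W N f e * psi p q s e)
                                    + (- c) * (psi p q s e * psi p q s e))) by (intro; unfold d; ring).
    rewrite sumA_lin. unfold qK, W. rewrite (cesaro_pairing s Hs f K0) by (try assumption; unfold K; lia).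
    rewrite (sumA_stable K0 K); [ring | | unfold K; lia].
    intros e He. rewrite Hf; auto; ring. }
  rewrite <- E.
  pose proof (sumA_cauchy_schwarz K d (psi p q s)) as Hcs.
  pose proof (psi_trunc_norm p q H s Hs CR HCR K) as [Hq0 Hq1]. fold qK in Hcs, Hq0, Hq1.
  pose proof (sumA_nonneg K (fun e => d e * d e) (fun e => Rle_0_sqr _)).
  assert (eps' * (1 + CR) = eps) by (unfold eps'; field; lra).
  nra.
Qed.

(* It converges, being a coordinate of a Cesaro average of the tensor-square
   walk, and it is bounded below through [cesaro_square_lower]. *)
Definition sq_cesaro (f : arc -> R) (e : arc) (T : nat) : R :=
  sum_f_R0 (fun t => Urpow p q t f e * Urpow p q t f e) T / INR (S T).

Lemma sq_cesaro_cv f e : fsupp arcs f -> exists L, Un_cv (sq_cesaro f e) L.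
Proof.
  intros [K0 Hf].
  set (F := fun x : arc * arc => f (fst x) * f (snd x)).
  assert (GF : fsupp arc_pairs F).
  { exists K0. intros [e1 e2] He. unfold F. simpl in *.
    destruct (Nat.max_spec (alev e1) (alev e2)) as [[_ E]|[_ E]]; rewrite E in He;
      [rewrite (Hf e2) | rewrite (Hf e1)]; auto; ring. }
  destruct (cesaro_cv _ (pair_space p q H) F (e, e) GF) as [L HL].
  exists L. apply (Un_cv_ext _ _ (fun T => f_equal (fun x => x / INR (S T))
    (sum_eq _ _ T (fun t _ => pair_orbit p q H t f (e, e))))). exact HL.
Qed.

Lemma arc_lower f K0 : supp arcs K0 f ->
  exists cp cm,
    sumA K0 (fun e => f e * psi p q 1 e) * sumA K0 (fun e => f e * psi p q 1 e)
      <= cp * cp * ((1 + CR) * (1 + CR)) /\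
    sumA K0 (fun e => f e * psi p q (-1) e) * sumA K0 (fun e => f e * psi p q (-1) e)
      <= cm * cm * ((1 + CR) * (1 + CR)) /\
    forall e, exists L, Un_cv (sq_cesaro f e) L /\
      cp * cp * (psi p q 1 e * psi p q 1 e) + cm * cm * (psi p q (-1) e * psi p q (-1) e) <= L.
Proof.
  intros Hf. assert (Gf : fsupp arcs f) by (exists K0; auto).
  assert (H1 : 1 * 1 = 1) by ring. assert (Hm : -1 * -1 = 1) by ring.
  destruct (walk_cesaro_limit 1 H1 f Gf) as [cp Hcp].
  destruct (walk_cesaro_limit (-1) Hm f Gf) as [cm Hcm].
  exists cp, cm. split; [apply (walk_cesaro_bound 1 H1); auto|].
  split; [apply (walk_cesaro_bound (-1) Hm); auto|].
  intro e. destruct (sq_cesaro_cv f e Gf) as [L HL]. exists L. split; auto.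
  replace (cp * cp * (psi p q 1 e * psi p q 1 e) + cm * cm * (psi p q (-1) e * psi p q (-1) e))
    with ((cp * psi p q 1 e) * (cp * psi p q 1 e) + (cm * psi p q (-1) e) * (cm * psi p q (-1) e))
    by ring.
  apply (cesaro_square_lower (fun t => Urpow p q t f e)); auto.
  - apply (Un_cv_ext (fun T => cesaro (walk_space p q H 1 H1) T f e)); auto.
    intro T. unfold cesaro. f_equal. apply sum_eq. intros. rewrite walk_orbit, pow1. ring.
  - apply (Un_cv_ext (fun T => cesaro (walk_space p q H (-1) Hm) T f e)); auto.
    intro T. unfold cesaro. f_equal. apply sum_eq. intros. rewrite walk_orbit. ring.
Qed.

Definition vertex_avg (f : arc -> R) (i : nat) (T : nat) : R :=
  sq_cesaro f (Rt i) T + match i with O => 0 | S k => sq_cesaro f (Lf k) T end.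

Lemma pi_stat_wgt k : pi_stat p q CR k = / (1 + CR) * wgt p q k.
Proof. unfold pi_stat. destruct k; reflexivity. Qed.

Lemma vertex_bound f j i : (forall e, tail e <> j -> f e = 0) ->
  exists L, Un_cv (vertex_avg f i) L /\
    2 * (ipar p q j f * ipar p q j f) * pi_stat p q CR i * pi_stat p q CR j <= L.
Proof.
  intros Hf.
  assert (Hs : supp arcs j f) by (intros e He; apply Hf; destruct e; simpl in *; lia).
  assert (H1 : 1 * 1 = 1) by ring. assert (Hm : -1 * -1 = 1) by ring.
  destruct (arc_lower f j Hs) as [cp [cm [Bp [Bm Larc]]]].
  rewrite (psi_pairing_local p q H 1 H1 f j Hf) in Bp.
  rewrite (psi_pairing_local p q H (-1) Hm f j Hf) in Bm.
  assert (Hvertex : exists L, Un_cv (vertex_avg f i) L /\ (cp * cp + cm * cm) * wgt p q i <= L).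
  { pose proof (psi_vertex p q H 1 H1 i) as V1. pose proof (psi_vertex p q H (-1) Hm i) as V2.
    destruct (Larc (Rt i)) as [L1 [HL1 GL1]].
    rewrite <- V1 in V2.
    replace ((cp * cp + cm * cm) * wgt p q i) with
      (cp * cp * (psi p q 1 (Rt i) * psi p q 1 (Rt i) +
                  match i with O => 0 | S k => psi p q 1 (Lf k) * psi p q 1 (Lf k) end) +
       cm * cm * (psi p q (-1) (Rt i) * psi p q (-1) (Rt i) +
                  match i with O => 0 | S k => psi p q (-1) (Lf k) * psi p q (-1) (Lf k) end))
      by (rewrite V2, V1; ring).
    destruct i as [|k].
    - exists (L1 + 0). split; [apply CV_plus; auto using cst_cv|].
      eapply Rle_trans; [|apply Rplus_le_compat_r, GL1]. right; ring.
    - destruct (Larc (Lf k)) as [L2 [HL2 GL2]].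
      exists (L1 + L2). split; [apply CV_plus; auto|].
      eapply Rle_trans; [|apply Rplus_le_compat; [apply GL1 | apply GL2]]. right; ring. }
  destruct Hvertex as [L [HL GL]]. exists L. split; auto.
  rewrite !pi_stat_wgt.
  pose proof (CR_pos p q H CR HCR). pose proof (wgt_pos p q H i).
  apply Rle_trans with ((cp * cp + cm * cm) * wgt p q i); auto.
  assert (Hsq : 2 * (wgt p q j * (ipar p q j f * ipar p q j f))
                <= (cp * cp + cm * cm) * ((1 + CR) * (1 + CR))) by lra.
  replace (2 * (ipar p q j f * ipar p q j f) * (/ (1 + CR) * wgt p q i) * (/ (1 + CR) * wgt p q j))
    with (2 * (wgt p q j * (ipar p q j f * ipar p q j f)) / ((1 + CR) * (1 + CR)) * wgt p q i)
    by (field; lra).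
  apply Rmult_le_compat_r; [lra|].
  apply Rmult_le_reg_r with ((1 + CR) * (1 + CR)); [nra|].
  unfold Rdiv. rewrite Rmult_assoc, Rinv_l by nra. lra.
Qed.

End WalkCesaro.

Lemma time_avg_split p q Psi0 i T :
  time_avg p q Psi0 i T =
  vertex_avg p q (fun a => re (Psi0 a)) i T + vertex_avg p q (fun a => im (Psi0 a)) i T.
Proof.
  set (fr := fun a => re (Psi0 a)). set (fi := fun a => im (Psi0 a)).
  set (sq := fun f e t => Urpow p q t f e * Urpow p q t f e).
  unfold time_avg, vertex_avg, sq_cesaro, prob, Cxnorm2. pose proof (INR_S_pos T).
  destruct i as [|k].
  - rewrite (sum_eq _ (fun t => sq fr (Rt 0) t + sq fi (Rt 0) t))
      by (intros; unfold sq, fr, fi; rewrite Upow_re, Upow_im; ring).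
    rewrite sum_plus. unfold sq. field. lra.
  - rewrite (sum_eq _ (fun t => (sq fr (Rt (S k)) t + sq fr (Lf k) t)
                                + (sq fi (Rt (S k)) t + sq fi (Lf k) t)))
      by (intros; unfold sq, fr, fi; rewrite !Upow_re, !Upow_im; ring).
    rewrite !sum_plus. unfold sq. field. lra.
Qed.

Lemma ip_a_norm p q j (Psi0 : state) :
  Cxnorm2 (ip_a p q j Psi0) =
  ipar p q j (fun a => re (Psi0 a)) * ipar p q j (fun a => re (Psi0 a)) +
  ipar p q j (fun a => im (Psi0 a)) * ipar p q j (fun a => im (Psi0 a)).
Proof. destruct j; reflexivity. Qed.

Theorem corollary1
  (p q r : nat -> R)
  (Hp0 : forall j, 0 <= p j) (Hq0 : forall j, 0 <= q j) (Hr0 : forall j, 0 <= r j)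
  (Hsum : forall j, p j + q j + r j = 1)
  (Hq_0 : q 0%nat = 0)
  (Hp_pos : forall j, 0 < p j)
  (Hq_pos : forall j, (1 <= j)%nat -> 0 < q j)
  (Hr : forall j, r j = 0)
  (CR : R)
  (HCR : infinite_sum (fun n => wgt p q (S n)) CR)  (* C_R = sum_{j>=1} ... < oo *)
  (j : nat) (Psi0 : state)
  (Hsupp : forall e, tail e <> j -> Psi0 e = Cx0)
  (Hunit : Cxnorm2 (Psi0 (Rt j)) +
           match j with O => 0 | S k => Cxnorm2 (Psi0 (Lf k)) end = 1)
  (i : nat) :
  exists mu : R,
    Un_cv (time_avg p q Psi0 i) mu /\
    mu >= 2 * Cxnorm2 (ip_a p q j Psi0) * pi_stat p q CR i * pi_stat p q CR j.
Proof.
  assert (H : walk_params p q).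
  { constructor; auto.
    - intro k. specialize (Hsum k). rewrite Hr in Hsum. lra.
    - intro k. apply Hq_pos. lia. }
  destruct (vertex_bound p q H CR HCR (fun a => re (Psi0 a)) j i) as [Lre [Hre Bre]].
  { intros e He. rewrite Hsupp; auto. }
  destruct (vertex_bound p q H CR HCR (fun a => im (Psi0 a)) j i) as [Lim [Him Bim]].
  { intros e He. rewrite Hsupp; auto. }
  exists (Lre + Lim). split.
  - apply (Un_cv_ext (fun T => vertex_avg p q (fun a => re (Psi0 a)) i T
                             + vertex_avg p q (fun a => im (Psi0 a)) i T)).
    + intro T. symmetry. apply time_avg_split.
    + apply CV_plus; auto.
  - rewrite ip_a_norm. lra.
Qed.
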